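(* Let $X=\sum_{n=0}^\infty a_nZ_n\binom{\cdot}{n}$ be a random Mahler series. Then $X$ is stationary (i.e. for every $s\in\mathbb{Z}_p$ the random function $X(\cdot+s)$ has the same law as $X$) if and only if $|a_n|\ge|a_{n+1}|$ for all $n\ge0$.
   Context: $\mathbb{Q}_p$ is the field of $p$-adic numbers with $p$-adic absolute value $|\cdot|$, and $\mathbb{Z}_p=\{x:|x|\le1\}$. $C(\mathbb{Z}_p,\mathbb{Q}_p)$ is the Banach space of continuous functions $\mathbb{Z}_p\to\mathbb{Q}_p$ with sup norm. For $x\in\mathbb{Z}_p$, $\binom{x}{0}=1$ and $\binom{x}{n}=x(x-1)\cdots(x-n+1)/n!$. A random Mahler series is the random function $X(t)=\sum_{n=0}^\infty a_nZ_n\binom{t}{n}$, $t\in\mathbb{Z}_p$, where $(Z_n)_{n\ge0}$ are independent random variables each uniformly distributed (normalised Haar measure) on $\mathbb{Z}_p$ — equivalently, independent $\mathbb{Q}_p$-valued $\mathbb{Q}_p$-Gaussian variables with essential supremum of $|Z_n|$ equal to $1$ — and $(a_n)\subset\mathbb{Q}_p$ satisfies $|a_n|\to0$; the series converges almost surely in $C(\mathbb{Z}_p,\mathbb{Q}_p)$. *)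

From HB Require Import structures.
From mathcomp Require Import all_boot all_order all_algebra.
From mathcomp Require Import all_classical all_reals all_analysis.
Set Implicit Arguments. Unset Strict Implicit. Unset Printing Implicit Defensive.
Import Order.TTheory GRing.Theory Num.Theory.
Local Open Scope classical_set_scope.
Local Open Scope ring_scope.

(* The field Q_p.  We describe (K, abs) as "the" field of p-adic       *)
(* numbers: a field with an absolute value which is multiplicative,    *)
(* ultrametric, restricts to the p-adic absolute value on Q, in which *)
(* Q is dense and which is complete.  These properties characterise   *)
(* (Q_p, |.|_p) up to unique isometric isomorphism (completion of Q). *)

Definition padic_abs_rat (R : realType) (p : nat) (q : rat) : R :=
  if q == 0 then 0
  else (p ^ logn p `|denq q|%N)%:R / (p ^ logn p `|numq q|%N)%:R.

Definition is_Qp (R : realType) (p : nat) (K : fieldType) (abs : K -> R) : Prop :=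
  (forall x, 0 <= abs x /\ (abs x = 0 <-> x = 0)) /\
  (forall x y, abs (x * y) = abs x * abs y) /\
  (forall x y, abs (x + y) <= Num.max (abs x) (abs y)) /\
  (forall q : rat, abs (ratr q) = padic_abs_rat R p q) /\
  (forall x (e : R), 0 < e -> exists q : rat, abs (x - ratr q) < e) /\
      (forall u : nat -> K,
          (forall e : R, 0 < e -> exists N, forall m n, (N <= m)%N -> (N <= n)%N ->
               abs (u m - u n) < e) ->
          exists l, forall e : R, 0 < e -> exists N, forall n, (N <= n)%N ->
               abs (u n - l) < e).

Definition Zp (R : realType) (K : fieldType) (abs : K -> R) : set K :=
  [set x | abs x <= 1].

Definition binom (K : fieldType) (x : K) (n : nat) : K :=
  (\prod_(i < n) (x - i%:R)) / (n`!)%:R.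

(* sum of a convergent series in (K, abs); 0 if it does not converge *)
Definition series_converges_to (R : realType) (K : fieldType) (abs : K -> R)
    (u : nat -> K) (l : K) : Prop :=
  forall e : R, 0 < e -> exists N, forall m, (N <= m)%N ->
     abs (\sum_(n < m) u n - l) < e.

Definition series_sum (R : realType) (K : fieldType) (abs : K -> R)
    (u : nat -> K) : K :=
  xget 0 [set l | series_converges_to abs u l].

Definition borelK (R : realType) (K : fieldType) (abs : K -> R) : set (set K) :=
  <<s [set B | exists (c : K) (r : R), B = [set y | abs (y - c) < r]] >>.

Definition continuous_on_Zp (R : realType) (K : fieldType) (abs : K -> R)
    (g : K -> K) : Prop :=
  forall t, Zp abs t -> forall e : R, 0 < e -> exists2 dl : R, 0 < dl &
    forall u, Zp abs u -> abs (u - t) < dl -> abs (g u - g t) < e.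

(* Borel sigma-algebra of C(Z_p, Q_p) with the sup norm (functions being
   considered only through their restriction to Z_p): generated by the
   open sup-norm balls  { f | sup_{t in Z_p} |f t - g t| < r }, g continuous.
   (For continuous f, the sup over the compact Z_p is attained, so
   "sup < r" is "forall t, |f t - g t| < r".) *)
Definition borelC (R : realType) (K : fieldType) (abs : K -> R) : set (set (K -> K)) :=
  <<s [set B | exists (g : K -> K) (r : R), continuous_on_Zp abs g /\ 0 < r /\
        B = [set f | forall t, Zp abs t -> abs (f t - g t) < r]] >>.

Section Prob.
Context (R : realType) (K : fieldType) (abs : K -> R)
        (d : measure_display) (T : measurableType d) (P : probability T R).

Definition measurable_K (Y : T -> K) : Prop :=
  forall B, borelK abs B -> measurable (Y @^-1` B).

(* law of Y is the normalised Haar measure of Z_p: Y takes values in Z_p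
   and its law is a translation-invariant (Borel probability) measure on Z_p *)
Definition haar_uniform (Y : T -> K) : Prop :=
  (forall w, Zp abs (Y w)) /\
  forall a, Zp abs a -> forall B, borelK abs B ->
    P (Y @^-1` [set a + y | y in B]) = P (Y @^-1` B).

Definition independent_family (Z : nat -> T -> K) : Prop :=
  forall (s : seq nat) (B : nat -> set K), uniq s -> (forall i, borelK abs (B i)) ->
    P (\bigcap_(i in [set j | j \in s]) (Z i @^-1` B i)) =
    (\prod_(i <- s) P (Z i @^-1` B i))%E.

Definition mahler_series (a : nat -> K) (Z : nat -> T -> K) : T -> K -> K :=
  fun w t => series_sum abs (fun n => a n * Z n w * binom t n).

Definition stationary (X : T -> K -> K) : Prop :=
  forall s, Zp abs s -> forall B, borelC abs B ->
    P (X @^-1` B) = P ((fun w t => X w (t + s)) @^-1` B).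

End Prob.

From Pilot Require Import Defs.
From HB Require Import structures.
From mathcomp Require Import all_boot all_order all_algebra.
From mathcomp Require Import all_classical all_reals all_analysis.
From mathcomp Require Import ring zify.
Import Order.TTheory GRing.Theory Num.Theory.
Local Open Scope classical_set_scope.
Local Open Scope ring_scope.
Set Implicit Arguments. Unset Strict Implicit.

(* Pascal's rule turns the Mahler coefficients a_k Z_k of X into a_k Z_k + a_(k+1) Z_(k+1)
   for X(. + 1).  If |a_(k+1)| <= |a_k|, these are a_k (Z_k + u_k Z_(k+1)) with u_k in Z_p,
   and the triangular map (Z_k) |-> (Z_k + u_k Z_(k+1)) permutes the residue classes
   mod p^(m+1) of Z_p^(N+1), so it preserves the Haar measure.  Since |a_k| -> 0, whether
   X lies in a sup-norm ball of radius r only depends on finitely many Z_k mod p^(m+1);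
   hence X(. + 1) and X have the same probability to lie in any ball.  Iterating gives
   integer shifts, uniform continuity gives all shifts s in Z_p, and the pi-lambda
   theorem extends this to all Borel sets, because ultrametric balls are nested or
   disjoint.
   Conversely, if |a_n| < |a_(n+1)| = r, then X never lies in the ball of radius r
   around a_(n+1) (binom(., n) + binom(., n+1)), since Mahler coefficients are bounded
   by the sup norm while |a_n Z_n - a_(n+1)| = r; but X(. + 1) lies in it with positive
   probability, namely when Z_(n+1) is close to 1 and the other Z_k are close to 0. *)

(* zmodp's [Zp] would otherwise shadow the unit ball of Defs. *)
Local Notation Zp := Defs.Zp.

(** * Mahler polynomials *)

Section Binomial.
Variable K : fieldType.

Lemma binom0 (x : K) : binom x 0 = 1.
Proof. by rewrite /binom big_ord0 fact0 divr1. Qed.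

Lemma binom0S k : binom (0 : K) k.+1 = 0.
Proof. by rewrite /binom big_ord_recl /= subr0 !mul0r. Qed.

Definition mahler_poly (N : nat) (c : nat -> K) (t : K) : K :=
  \sum_(k < N) c k * binom t k.

Lemma mahler_polyB N c c' t :
  mahler_poly N c t - mahler_poly N c' t = mahler_poly N (fun k => c k - c' k) t.
Proof. by rewrite /mahler_poly -sumrB; apply: eq_bigr => k _; rewrite mulrBl. Qed.

Hypothesis charK : has_pchar0 K.

Lemma natf_neq0 n : (0 < n)%N -> (n%:R : K) != 0.
Proof. by move=> n_gt0; rewrite (pcharf0P _).1 // -lt0n. Qed.

Lemma binomD1 (x : K) k : binom (x + 1) k.+1 = binom x k.+1 + binom x k.
Proof.
rewrite /binom big_ord_recl big_ord_recr /= subr0.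
rewrite (eq_bigr (fun i : 'I_k => x - i%:R)); last first.
  by move=> i _; rewrite /bump /= add1n -natr1; ring.
have kf_neq0 := natf_neq0 (fact_gt0 k).
have kS_neq0 := natf_neq0 (ltn0Sn k).
rewrite factS natrM; field.
by rewrite kf_neq0 addrC natr1.
Qed.

Lemma binom_natr j k : binom (j%:R : K) k = 'C(j, k)%:R.
Proof.
elim: j k => [|j IH] [|k].
- by rewrite binom0.
- by rewrite binom0S bin0n.
- by rewrite binom0 bin0.
- by rewrite -natr1 binomD1 !IH binS natrD.
Qed.

Lemma mahler_polyD1 N c t :
  mahler_poly N.+1 c (t + 1) =
  mahler_poly N (fun k => c k + c k.+1) t + c N * binom t N.
Proof.
rewrite /mahler_poly; elim: N => [|N IH].
  by rewrite big_ord1 big_ord0 add0r !binom0.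
by rewrite big_ord_recr /= IH binomD1 [in RHS]big_ord_recr /=; ring.
Qed.

Lemma mahler_poly_diff N c t :
  mahler_poly N.+1 c (t + 1) - mahler_poly N.+1 c t = mahler_poly N (fun k => c k.+1) t.
Proof.
rewrite mahler_polyD1 [mahler_poly N.+1 c t]/mahler_poly big_ord_recr /=.
rewrite opprD addrACA subrr addr0 mahler_polyB.
by apply: eq_bigr => k _; rewrite addrC addKr.
Qed.

Lemma eq_mahler_poly N c c' : (forall k, (k < N)%N -> c k = c' k) ->
  mahler_poly N c = mahler_poly N c'.
Proof. by move=> cc'; apply/funext => t; apply: eq_bigr => k _; rewrite cc'. Qed.

End Binomial.

Lemma prob_preimage_eq_sigma (d : measure_display) (T : measurableType d)
    (R : realType) (P : probability T R) (U : Type) (X Y : T -> U)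
    (G : set (set U)) : setI_closed G ->
  (forall B, G B -> [/\ measurable (X @^-1` B), measurable (Y @^-1` B) &
                        P (X @^-1` B) = P (Y @^-1` B)]) ->
  forall B, <<s G >> B -> P (X @^-1` B) = P (Y @^-1` B).
Proof.
move=> GI GL.
pose L := [set B | [/\ measurable (X @^-1` B), measurable (Y @^-1` B) &
                       P (X @^-1` B) = P (Y @^-1` B)]].
suff /dynkin_lambda_system/(lambda_system_subset GI) sGL : dynkin L.
  by move=> B /(sGL GL (fun _ _ _ _ => I)) [].
split.
- by rewrite /L /= !preimage_setT.
- move=> B [XB YB XYB]; rewrite /L /= -!preimage_setC.
  by split; rewrite ?probability_setC ?XYB //; apply: measurableC.
- move=> F tF LF; rewrite /L /= !preimage_bigcup.
  have preimage_trivI (Z : T -> U) : trivIset setT (fun n => Z @^-1` F n).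
    by move=> i j _ _ [w [Fi Fj]]; apply: tF => //; exists (Z w).
  split; try by apply: bigcup_measurable => k _; case: (LF k).
  rewrite !measure_bigcup //; first by apply: eq_eseriesr => k _; case: (LF k).
  + by move=> k _; case: (LF k).
  + by move=> k _; case: (LF k).
Qed.

Lemma solve_congruence (n d : int) (M : nat) : (0 < M)%N -> coprime `|d| M ->
  exists2 j : nat, (j < M)%N & (M%:Z %| n - j%:Z * d)%Z.
Proof.
move=> M_gt0 dM; have M_neq0 : M%:Z != 0 by rewrite eqz_nat -lt0n.
have /coprimezP[[u v] /= uv] : coprimez d M%:Z by rewrite coprimezE absz_nat.
have nu_ge0 : 0 <= ((n * u) %% M%:Z)%Z by rewrite modz_ge0.
exists (absz ((n * u) %% M%:Z)%Z); first by rewrite -ltz_nat gez0_abs // ltz_pmod.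
have nuE : ((n * u) %% M%:Z)%Z = n * u - (n * u %/ M%:Z)%Z * M%:Z.
  by rewrite {2}(divz_eq (n * u) M%:Z) addrC addKr.
apply/dvdzP; exists (n * v + (n * u %/ M%:Z)%Z * d).
by rewrite gez0_abs // nuE -{1}[n]mulr1 -uv; ring.
Qed.

Lemma measure_bigsetU_fin (d : measure_display) (T : ringOfSetsType d)
    (R : realFieldType) (mu : {content set T -> \bar R}) (V : finType)
    (A : {pred V}) (F : V -> set T) :
  (forall v, measurable (F v)) -> trivIset setT F ->
  mu (\big[setU/set0]_(v in A) F v) = \sum_(v in A) mu (F v).
Proof.
move=> Fm tF; rewrite big_enum_val [RHS]big_enum_val.
by apply: measure_bigsetU_ord => // i j _ _ /tF => /(_ I I) /enum_val_inj.
Qed.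

(** * Non-archimedean absolute values *)

Definition nonarchimedean_abs (R : realType) (K : fieldType) (abs : K -> R) :=
  [/\ forall x, 0 <= abs x, forall x, abs x = 0 <-> x = 0,
      forall x y, abs (x * y) = abs x * abs y &
      forall x y, abs (x + y) <= Num.max (abs x) (abs y)].

Lemma is_Qp_nonarchimedean (R : realType) (p : nat) (K : fieldType) (abs : K -> R) :
  is_Qp p abs -> nonarchimedean_abs abs.
Proof. by case=> h [hM [hD _]]; split=> // x; case: (h x). Qed.

Section NonArchimedean.
Variables (R : realType) (K : fieldType) (abs : K -> R).
Hypothesis habs : nonarchimedean_abs abs.

Lemma abs_ge0 x : 0 <= abs x. Proof. by case: habs. Qed.
Lemma abs_eq0 x : abs x = 0 <-> x = 0. Proof. by case: habs. Qed.
Lemma absM x y : abs (x * y) = abs x * abs y. Proof. by case: habs. Qed.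
Lemma abs_max x y : abs (x + y) <= Num.max (abs x) (abs y). Proof. by case: habs. Qed.

Lemma abs0 : abs 0 = 0. Proof. exact/abs_eq0. Qed.

Lemma abs_gt0 x : x != 0 -> 0 < abs x.
Proof.
by move=> x_neq0; rewrite lt_def abs_ge0 andbT; apply: contra_neq x_neq0 => /abs_eq0.
Qed.

Lemma abs1 : abs 1 = 1.
Proof.
have abs1_gt0 : 0 < abs 1 by rewrite abs_gt0 ?oner_neq0.
by apply: (mulfI (lt0r_neq0 abs1_gt0)); rewrite -absM !mulr1.
Qed.

Lemma absN x : abs (- x) = abs x.
Proof.
suff absN1 : abs (-1) = 1 by rewrite -mulN1r absM absN1 mul1r.
have sq : abs (-1) * abs (-1) = 1 by rewrite -absM mulN1r opprK abs1.
have : (abs (-1) - 1) * (abs (-1) + 1) = 0.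
  by rewrite -[RHS](subrr 1) -[X in _ = X - _]sq; ring.
move/eqP; rewrite mulf_eq0 (gt_eqF (ltr_wpDl (abs_ge0 _) ltr01)) orbF.
by rewrite subr_eq0 => /eqP.
Qed.

Lemma abs_distC x y : abs (x - y) = abs (y - x).
Proof. by rewrite -absN opprB. Qed.

Lemma absD_le x y (e : R) : abs x <= e -> abs y <= e -> abs (x + y) <= e.
Proof. by move=> hx hy; apply: le_trans (abs_max x y) _; rewrite ge_max hx hy. Qed.

Lemma absD_lt x y (e : R) : abs x < e -> abs y < e -> abs (x + y) < e.
Proof. by move=> hx hy; apply: le_lt_trans (abs_max x y) _; rewrite gt_max hx hy. Qed.

Lemma absB_le x y (e : R) : abs x <= e -> abs y <= e -> abs (x - y) <= e.
Proof. by move=> hx hy; apply: absD_le; rewrite ?absN. Qed.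

Lemma absB_lt x y (e : R) : abs x < e -> abs y < e -> abs (x - y) < e.
Proof. by move=> hx hy; apply: absD_lt; rewrite ?absN. Qed.

Lemma abs_sum_lt (I : Type) (s : seq I) (P : pred I) (F : I -> K) (e : R) : 0 < e ->
  (forall i, P i -> abs (F i) < e) -> abs (\sum_(i <- s | P i) F i) < e.
Proof.
move=> e_gt0 hF; apply: (big_ind (fun x => abs x < e)) => //.
  by rewrite abs0.
by move=> x y hx hy; apply: absD_lt hx hy.
Qed.

Lemma abs_natr_le1 n : abs n%:R <= 1.
Proof.
by elim: n => [|n IH]; rewrite ?abs0 ?ler01 // mulrS; apply: absD_le; rewrite ?abs1.
Qed.

Lemma absM_le1 x y : abs x <= 1 -> abs y <= 1 -> abs (x * y) <= 1.
Proof. by move=> hx hy; rewrite absM mulr_ile1 ?abs_ge0. Qed.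

Lemma abs_mul_lt (b x : K) (e r : R) : abs x <= e -> abs b * e < r -> abs (b * x) < r.
Proof. by move=> hx; apply: le_lt_trans; rewrite absM ler_wpM2l ?abs_ge0. Qed.

Lemma abs_addr_dom x y : abs y < abs x -> abs (x + y) = abs x.
Proof.
move=> lt_yx; apply/eqP; rewrite eq_le; apply/andP; split.
  by apply: le_trans (abs_max x y) _; rewrite ge_max lexx ltW.
have := abs_max (x + y) (- y); rewrite addrK absN le_max => /orP[//|le_xy].
by move: lt_yx; rewrite ltNge le_xy.
Qed.

Lemma ultrametric_ball_eq x y c (r : R) :
  abs (x - y) < r -> (abs (x - c) < r) = (abs (y - c) < r).
Proof.
move=> lt_xy; apply/idP/idP => lt_c.
  have -> : y - c = (x - c) - (x - y) by ring.
  exact: absB_lt.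
have -> : x - c = (y - c) + (x - y) by ring.
exact: absD_lt.
Qed.

Lemma abs_prod_sub_le (I : Type) (s : seq I) (F G : I -> K) (e : R) : 0 <= e ->
  (forall i, abs (F i) <= 1) -> (forall i, abs (G i) <= 1) ->
  (forall i, abs (F i - G i) <= e) ->
  abs (\prod_(i <- s) F i - \prod_(i <- s) G i) <= e.
Proof.
move=> e_ge0 F1 G1 FG.
pose Q x y := [/\ abs x <= 1, abs y <= 1 & abs (x - y) <= e].
suff [] : Q (\prod_(i <- s) F i) (\prod_(i <- s) G i) by [].
apply: big_ind2 => [|x1 x2 y1 y2 [x1_le1 x2_le1 e12] [y1_le1 y2_le1 ey]|i _].
- by split; rewrite ?abs1 // subrr abs0.
- split; rewrite ?absM_le1 //.
  have -> : x1 * y1 - x2 * y2 = x1 * (y1 - y2) + (x1 - x2) * y2 by ring.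
  apply: absD_le; rewrite absM.
    by rewrite (le_trans _ ey) // ler_piMl ?abs_ge0.
  by rewrite (le_trans _ e12) // ler_piMr ?abs_ge0.
- by split.
Qed.

Lemma absV x : abs x^-1 = (abs x)^-1.
Proof.
have [->|x_neq0] := eqVneq x 0; first by rewrite invr0 abs0 invr0.
have absx_neq0 := lt0r_neq0 (abs_gt0 x_neq0).
by apply: (mulfI absx_neq0); rewrite -absM !mulfV ?abs1.
Qed.

Lemma ZpD x y : Zp abs x -> Zp abs y -> Zp abs (x + y).
Proof. exact: absD_le. Qed.

Lemma ZpB x y : Zp abs x -> Zp abs y -> Zp abs (x - y).
Proof. exact: absB_le. Qed.

Lemma Zp_natr n : Zp abs n%:R.
Proof. exact: abs_natr_le1. Qed.

Definition supball (g : K -> K) (r : R) : set (K -> K) :=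
  [set f | forall t, Zp abs t -> abs (f t - g t) < r].

Lemma supball_congr f h g r :
  (forall t, Zp abs t -> abs (f t - h t) < r) -> supball g r f <-> supball g r h.
Proof.
move=> fh; split=> hb t Zt.
  by rewrite -(ultrametric_ball_eq _ (fh t Zt)); apply: hb.
by rewrite (ultrametric_ball_eq _ (fh t Zt)); apply: hb.
Qed.

Lemma preimage_supball_shift (T : Type) (F : T -> K -> K) c g r : Zp abs c ->
  (fun w t => F w (t + c)) @^-1` supball g r = F @^-1` supball (fun u => g (u - c)) r.
Proof.
move=> Zc; apply/seteqP; split=> w /= hw t Zt.
  by have := hw (t - c) (ZpB Zt Zc); rewrite subrK.
by have := hw (t + c) (ZpD Zt Zc); rewrite addrK.
Qed.

Definition supballs : set (set (K -> K)) :=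
  [set B | B = set0 \/ exists g (r : R), 0 < r /\ B = supball g r].

(* Two ultrametric balls are nested or disjoint. *)
Lemma setI_closed_supballs : setI_closed supballs.
Proof.
move=> A B [->|[g1 [r1 [r1_gt0 ->]]]]; first by left; rewrite set0I.
move=> [->|[g2 [r2 [r2_gt0 ->]]]]; first by left; rewrite setI0.
have [->|/set0P[f0 [f0g1 f0g2]]] := eqVneq (supball g1 r1 `&` supball g2 r2) set0.
  by left.
have sub g g' (r r' : R) : r <= r' -> supball g r f0 -> supball g' r' f0 ->
    supball g r `<=` supball g' r'.
  move=> le_rr' f0g f0g' f fg t Zt.
  have -> : f t - g' t = (f t - g t) + ((g t - f0 t) + (f0 t - g' t)) by ring.
  apply: absD_lt; first exact: lt_le_trans (fg t Zt) le_rr'.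
  apply: absD_lt; last exact: f0g' t Zt.
  by rewrite abs_distC; apply: lt_le_trans (f0g t Zt) le_rr'.
right; have [le_r12|lt_r21] := leP r1 r2.
  by exists g1, r1; rewrite setIidl //; apply: sub.
by exists g2, r2; rewrite setIidr //; apply: sub => //; apply: ltW.
Qed.

Lemma borelC_sub_supballs : borelC abs `<=` <<s supballs >>.
Proof.
apply: sub_smallest2r; first exact: smallest_sigma_algebra.
by move=> B [g [r [_ [r_gt0 ->]]]]; right; exists g, r.
Qed.

Lemma abs_sum_tail_lt (u : nat -> K) N n (e : R) : (N <= n)%N -> 0 < e ->
  (forall k, (N <= k)%N -> abs (u k) < e) ->
  abs (\sum_(k < n) u k - \sum_(k < N) u k) < e.
Proof.
move=> Nn e_gt0 ue; rewrite -!(big_mkord xpredT) (big_cat_nat (leq0n N) Nn) /=.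
rewrite addrAC subrr add0r big_seq; apply: abs_sum_lt => // k.
by rewrite mem_index_iota => /andP[Nk _]; apply: ue.
Qed.

Definition null_seq (u : nat -> K) :=
  forall e : R, 0 < e -> exists N, forall n, (N <= n)%N -> abs (u n) < e.

(** * p-adic approximation *)

Section Padic.
Variable p : nat.
Hypotheses (p_prime : prime p) (absQp : is_Qp p abs).

Lemma abs_ratr q : abs (ratr q) = padic_abs_rat R p q.
Proof. by case: absQp => _ [_ [_ []]]. Qed.

Lemma expn_p_gt0 m : (0 < p ^ m)%N.
Proof. by rewrite expn_gt0 prime_gt0. Qed.

Definition rho m : R := ((p ^ m)%:R)^-1.

Lemma rho_gt0 m : 0 < rho m.
Proof. by rewrite invr_gt0 ltr0n expn_p_gt0. Qed.

Lemma ltr_rho l m : (rho l < rho m) = (m < l)%N.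
Proof. by rewrite ltf_pV2 ?posrE ?ltr0n ?expn_p_gt0 // ltr_nat ltn_exp2l ?prime_gt1. Qed.

Lemma ler_rho l m : (rho l <= rho m) = (m <= l)%N.
Proof. by rewrite lef_pV2 ?posrE ?ltr0n ?expn_p_gt0 // ler_nat leq_exp2l ?prime_gt1. Qed.

Lemma rho_le1 m : rho m <= 1.
Proof. by rewrite -[1](invr1) -[1%R]/(1%:R) -(expn0 p) ler_rho. Qed.

Lemma exists_rho_lt (e : R) : 0 < e -> exists m, rho m < e.
Proof.
move=> e_gt0; have /archi_boundP : 0 <= e^-1 by rewrite invr_ge0 ltW.
set n := Num.bound _ => lt_n; exists n.
rewrite -[e]invrK ltf_pV2 ?posrE ?invr_gt0 ?ltr0n ?expn_p_gt0 //.
by rewrite (lt_le_trans lt_n) // ler_nat ltnW // ltn_expl // prime_gt1.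
Qed.

Lemma abs_intr (z : int) : z != 0 -> abs z%:~R = rho (logn p `|z|).
Proof.
move=> z_neq0; rewrite -[z%:~R](ratr_int K) abs_ratr /padic_abs_rat.
by rewrite intr_eq0 (negbTE z_neq0) numq_int denq_int /= logn1 expn0 div1r.
Qed.

Lemma Qp_char0 : has_pchar0 K.
Proof.
apply/pcharf0P => n; apply/eqP/eqP => [n_eq0|->//]; apply/eqP.
apply: contraTT (rho_gt0 (logn p `|n%:Z|)) => n_neq0.
by rewrite -abs_intr ?eqz_nat // -pmulrn n_eq0 abs0 ltxx.
Qed.

Lemma abs_intr_lt_rho (z : int) m : (abs z%:~R < rho m) = (p ^ m.+1 %| `|z|)%N.
Proof.
have [->|z_neq0] := eqVneq z 0; first by rewrite mulr0z abs0 rho_gt0 dvdn0.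
by rewrite abs_intr // ltr_rho -pfactor_dvdn // absz_gt0.
Qed.

Lemma coprime_p_denq q : abs (ratr q) <= 1 -> coprime p `|denq q|.
Proof.
move=> q_le1; rewrite prime_coprime //; apply/negP => p_den.
have p_num : ~~ (p %| `|numq q|)%N.
  apply/negP => p_num; have := coprime_dvdl p_num (coprime_num_den q).
  by rewrite prime_coprime // p_den.
have q_neq0 : q != 0 by apply: contraNneq p_num => ->; rewrite dvdn0.
move: q_le1; rewrite abs_ratr /padic_abs_rat (negbTE q_neq0).
rewrite [logn p `|numq q|]logn_coprime ?prime_coprime // expn0 divr1 lern1 leqNgt.
rewrite -[X in (X < _)%N](expn0 p) ltn_exp2l ?prime_gt1 //.
by rewrite logn_gt0 mem_primes p_prime absz_gt0 denq_neq0 p_den.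
Qed.

Lemma abs_denq q : abs (ratr q) <= 1 -> abs (denq q)%:~R = 1.
Proof.
move=> q_le1; rewrite abs_intr ?denq_neq0 // logn_coprime ?coprime_p_denq //.
by rewrite /rho expn0 invr1.
Qed.

Lemma ratr_approx q m : abs (ratr q) <= 1 ->
  exists2 j : nat, (j < p ^ m.+1)%N & abs (ratr q - j%:R) < rho m.
Proof.
move=> q_le1.
have dM : coprime `|denq q| (p ^ m.+1).
  by rewrite coprime_sym coprimeXl // coprime_p_denq.
have [j jM Mj] := solve_congruence (numq q) (expn_p_gt0 m.+1) dM.
exists j => //.
have d_neq0 : (denq q)%:~R != 0 :> K.
  apply/eqP => d_eq0; have := abs_denq q_le1.
  by rewrite d_eq0 abs0 => /eqP; rewrite eq_sym oner_eq0.
have -> : ratr q - j%:R = (numq q - j%:Z * denq q)%:~R / (denq q)%:~R :> K.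
  by rewrite /ratr intrB intrM -pmulrn; field.
by rewrite absM absV abs_denq // invr1 mulr1 abs_intr_lt_rho.
Qed.

Lemma natr_approx x m : Zp abs x ->
  exists2 j : nat, (j < p ^ m.+1)%N & abs (x - j%:R) < rho m.
Proof.
move=> Zx.
have [q xq] : exists q : rat, abs (x - ratr q) < rho m.
  by case: absQp => _ [_ [_ [_ [dense _]]]]; apply: dense; apply: rho_gt0.
have q_le1 : abs (ratr q) <= 1.
  rewrite -(subKr x (ratr q)) absB_le //.
  exact: ltW (lt_le_trans xq (rho_le1 m)).
have [j jM qj] := ratr_approx m q_le1.
exists j => //.
have -> : x - j%:R = (x - ratr q) + (ratr q - j%:R) by ring.
exact: absD_lt.
Qed.

Lemma natr_approx_uniq x m i j : (i < p ^ m.+1)%N -> (j < p ^ m.+1)%N ->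
  abs (x - i%:R) < rho m -> abs (x - j%:R) < rho m -> i = j.
Proof.
move=> iM jM xi xj; apply/eqP; apply: contraTT xj => ij.
have : ~~ (p ^ m.+1 %| `|i%:Z - j%:Z|)%N.
  by rewrite gtnNdvd // ?absz_gt0 ?subr_eq0 ?eqz_nat //; lia.
rewrite -abs_intr_lt_rho intrB -!pmulrn; apply: contra => xj.
have -> : (i%:R - j%:R : K) = (x - j%:R) - (x - i%:R) by ring.
exact: absB_lt.
Qed.

(* [abs] takes its values in p^Z, so the open ball of radius [rho m] around [x] in Z_p is
   the residue class of [x] mod p^(m+1); [res m x] is its representative in
   [0, p^(m+1)), and 0 when [x] is not in Z_p. *)
Definition res m x : nat :=
  xget 0%N [set j | (j < p ^ m.+1)%N /\ abs (x - j%:R) < rho m].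

Lemma res_lt m x : (res m x < p ^ m.+1)%N.
Proof. by rewrite /res; case: xgetP => [j _ []|_] //; apply: expn_p_gt0. Qed.

Lemma res_close m x : Zp abs x -> abs (x - (res m x)%:R) < rho m.
Proof.
move=> Zx; rewrite /res; case: xgetP => [j _ [] //|none].
by have [j jM xj] := natr_approx m Zx; case: (none j).
Qed.

Lemma res_eq m x j : Zp abs x -> (j < p ^ m.+1)%N -> abs (x - j%:R) < rho m ->
  res m x = j.
Proof. by move=> Zx jM; apply: natr_approx_uniq (res_lt m x) jM (res_close m Zx). Qed.

Lemma abs_fact_gt0 k : 0 < abs (k`!%:R : K).
Proof. by rewrite abs_gt0 // (natf_neq0 Qp_char0) ?fact_gt0. Qed.

Lemma abs_binom_sub x y k : Zp abs x -> Zp abs y ->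
  abs (binom x k - binom y k) <= abs (x - y) / abs (k`!%:R : K).
Proof.
move=> Zx Zy; rewrite /binom -mulrBl absM absV ler_wpM2r ?invr_ge0 ?abs_ge0 //.
apply: abs_prod_sub_le => [|i|i|i]; rewrite ?abs_ge0 //.
- exact: absB_le (Zp_natr i).
- exact: absB_le (Zp_natr i).
- by rewrite opprB addrA subrK.
Qed.

Lemma abs_binom_le1 t k : Zp abs t -> abs (binom t k) <= 1.
Proof.
move=> Zt; have [m rho_lt] := exists_rho_lt (abs_fact_gt0 k).
have [j _ tj] := natr_approx m Zt.
rewrite -[binom t k](subrK (binom j%:R k)); apply: absD_le.
  rewrite (le_trans (abs_binom_sub k Zt (Zp_natr j))) //.
  by rewrite ler_pdivrMr ?abs_fact_gt0 // mul1r ltW // (lt_trans tj rho_lt).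
by rewrite (binom_natr Qp_char0); apply: abs_natr_le1.
Qed.

Lemma exists_rho_mul_lt (f : nat -> R) N (r : R) : 0 < r ->
  exists m, forall k, (k < N)%N -> f k * rho m < r.
Proof.
move=> r_gt0; set B := \sum_(k < N) `|f k|.
have B1_gt0 : 0 < B + 1 by rewrite ltr_wpDl ?sumr_ge0.
have [m rho_lt] := exists_rho_lt (divr_gt0 r_gt0 B1_gt0).
exists m => k kN.
have fk_le : f k <= B.
  by rewrite (le_trans (ler_norm _)) // /B (bigD1 (Ordinal kN)) //= lerDl sumr_ge0.
rewrite (le_lt_trans (ler_wpM2r (ltW (rho_gt0 m)) fk_le)) //.
rewrite (@lt_trans _ _ ((B + 1) * rho m)) ?ltr_pM2r ?rho_gt0 ?ltrDl ?ltr01 //.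
by rewrite mulrC -ltr_pdivlMr.
Qed.

Lemma series_sum_trunc (u : nat -> K) N (e : R) : null_seq u -> 0 < e ->
  (forall k, (N <= k)%N -> abs (u k) < e) ->
  abs (series_sum abs u - \sum_(k < N) u k) < e.
Proof.
move=> u0 e_gt0 ue.
have : series_converges_to abs u (series_sum abs u).
  apply: xgetPex; case: absQp => _ [_ [_ [_ [_ complete]]]].
  apply: complete => e' e'_gt0; have [N' uN'] := u0 e' e'_gt0.
  exists N' => m n mN nN.
  have -> : \sum_(k < m) u k - \sum_(k < n) u k =
    (\sum_(k < m) u k - \sum_(k < N') u k) - (\sum_(k < n) u k - \sum_(k < N') u k).
    by ring.
  by apply: absB_lt; apply: abs_sum_tail_lt.
case/(_ e e_gt0) => N1 uN1; set n := maxn N N1.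
have -> : series_sum abs u - \sum_(k < N) u k =
  (\sum_(k < n) u k - \sum_(k < N) u k) - (\sum_(k < n) u k - series_sum abs u).
  by ring.
apply: absB_lt; first by apply: abs_sum_tail_lt; rewrite ?leq_maxl.
by apply: uN1; rewrite leq_maxr.
Qed.

Lemma mahler_poly_equicontinuous (b : nat -> R) N (r : R) : 0 < r ->
  exists m, forall c, (forall k, abs (c k) <= b k) ->
    forall x y, Zp abs x -> Zp abs y -> abs (x - y) < rho m ->
    abs (mahler_poly N c x - mahler_poly N c y) < r.
Proof.
move=> r_gt0.
have [m bm] := exists_rho_mul_lt (fun k => b k / abs (k`!%:R : K)) N r_gt0.
exists m => c cb x y Zx Zy xy.
rewrite /mahler_poly -sumrB; apply: abs_sum_lt => // k _; rewrite -mulrBr absM.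
apply: le_lt_trans (bm k (ltn_ord k)).
have bk_ge0 : 0 <= b k by apply: le_trans (cb k); apply: abs_ge0.
rewrite (le_trans (ler_pM _ _ (cb k) (abs_binom_sub k Zx Zy))) ?abs_ge0 //.
rewrite mulrA mulrAC; apply: ler_wpM2l; last exact: ltW.
by rewrite divr_ge0 ?abs_ge0.
Qed.

Lemma continuous_mahler_poly N c : continuous_on_Zp abs (mahler_poly N c).
Proof.
move=> t Zt e e_gt0.
have [m cont] := mahler_poly_equicontinuous (fun k => abs (c k)) N e_gt0.
by exists (rho m); [apply: rho_gt0 | move=> u Zu ut; apply: cont].
Qed.

Lemma abs_mahler_coef_lt N c (r : R) :
  (forall t, Zp abs t -> abs (mahler_poly N c t) < r) ->
  forall k, (k < N)%N -> abs (c k) < r.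
Proof.
elim: N c => [//|N IH] c small [_|k kN].
  have := small 0 (Zp_natr 0); rewrite /mahler_poly big_ord_recl binom0 mulr1.
  by rewrite big1 ?addr0 // => i _; rewrite binom0S mulr0.
apply: (IH (fun j => c j.+1)) => // t Zt; rewrite -(mahler_poly_diff Qp_char0).
by apply: absB_lt; apply: small => //; apply: ZpD Zt (Zp_natr 1).
Qed.

Definition congruent m L (z z' : nat -> K) :=
  forall k, (k <= L)%N -> abs (z k - z' k) < rho m.

Lemma congruent_sym m L z z' : congruent m L z z' -> congruent m L z' z.
Proof. by move=> zz' k kL; rewrite abs_distC; apply: zz'. Qed.

Lemma congruent_trans m L z1 z2 z3 :
  congruent m L z1 z2 -> congruent m L z2 z3 -> congruent m L z1 z3.
Proof.
move=> z12 z23 k kL; have -> : z1 k - z3 k = (z1 k - z2 k) + (z2 k - z3 k) by ring.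
by apply: absD_lt; [apply: z12 | apply: z23].
Qed.

Definition cylindrical m L (Q : (nat -> K) -> Prop) :=
  forall z z', congruent m L z z' -> Q z -> Q z'.

Local Notation residues m L := {ffun 'I_L.+1 -> 'I_(p ^ m.+1)}.

Definition resvec m L (z : nat -> K) : residues m L :=
  [ffun i : 'I_L.+1 => Ordinal (res_lt m (z i))].

Definition natvec m L (v : residues m L) (k : nat) : K :=
  (v (inord k) : nat)%:R.

Lemma resvecP m L z v : (forall k, (k <= L)%N -> Zp abs (z k)) ->
  resvec m L z = v <-> congruent m L z (natvec v).
Proof.
move=> Zz; split=> [<- k kL|zv].
  by rewrite /natvec /resvec ffunE /= inordK //; apply: res_close; apply: Zz.
apply/ffunP => i; apply: val_inj; rewrite ffunE /=.
apply: res_eq; [exact: Zz (ltn_ord i) | exact: ltn_ord |].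
by have := zv i (ltn_ord i); rewrite /natvec inord_val.
Qed.

Lemma resvec_natvec m L v : resvec m L (natvec v) = v.
Proof.
by apply/resvecP => k _; [apply: Zp_natr | rewrite subrr abs0 rho_gt0].
Qed.

Lemma cylindrical_resvec m L Q z : cylindrical m L Q ->
  (forall k, (k <= L)%N -> Zp abs (z k)) -> Q z <-> Q (natvec (resvec m L z)).
Proof.
move=> cQ Zz; have zv := (resvecP (resvec m L z) Zz).1 erefl.
by split; apply: cQ => //; apply: congruent_sym.
Qed.

(** * Cylinder events of Haar-distributed sequences *)

Section HaarCylinders.
Variables (d : measure_display) (T : measurableType d) (P : probability T R).
Variable Z : nat -> T -> K.
Hypotheses (Z_meas : forall n, measurable_K abs (Z n))
  (Z_haar : forall n, haar_uniform abs P (Z n))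
  (Z_indep : independent_family abs P Z).

Definition disc (c : K) (r : R) : set K := [set y | abs (y - c) < r].

Lemma borelK_disc c r : borelK abs (disc c r).
Proof. by apply: sub_sigma_algebra; exists c, r. Qed.

Definition zeta (w : T) (k : nat) : K := Z k w.

Lemma Zp_zeta w k : Zp abs (zeta w k).
Proof. by case: (Z_haar k) => Zk _; apply: Zk. Qed.

Lemma prob_Z_disc_translate n a r : Zp abs a ->
  P (Z n @^-1` disc a r) = P (Z n @^-1` disc 0 r).
Proof.
move=> Za; rewrite -((Z_haar n).2 a Za _ (borelK_disc 0 r)).
congr (P (_ @^-1` _)); apply/seteqP; split=> y /=.
  by move=> ya; exists (y - a); rewrite /disc /= ?subr0 // addrC subrK.
by case=> y'; rewrite /disc /= subr0 => y'0 <-; rewrite addrC addKr.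
Qed.

Lemma prob_Z_disc n c m : Zp abs c -> P (Z n @^-1` disc c (rho m)) = (rho m.+1)%:E.
Proof.
move=> Zc; rewrite prob_Z_disc_translate //; set M := (p ^ m.+1)%N.
set v := P (Z n @^-1` disc 0 (rho m)).
have v_fin : v \is a fin_num.
  rewrite ge0_fin_numE ?measure_ge0 // (le_lt_trans (probability_le1 _ _)) ?ltey //.
  by apply: Z_meas; apply: borelK_disc.
pose F (j : 'I_M) := Z n @^-1` disc j%:R (rho m).
have cover : [set: T] = \big[setU/set0]_(j < M) F j.
  apply/seteqP; split=> w // _.
  rewrite (bigD1 (Ordinal (res_lt m (Z n w)))) //=; left.
  exact/res_close/Zp_zeta.
have tF : trivIset setT F.
  move=> i j _ _ [w [wi wj]]; apply: val_inj.
  exact: natr_approx_uniq (ltn_ord i) (ltn_ord j) wi wj.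
have := probability_setT P; rewrite cover measure_bigsetU_ord //; last first.
  by move=> j; apply: Z_meas; apply: borelK_disc.
rewrite (eq_bigr (fun=> (fine v)%:E)) => [|j _]; last first.
  by rewrite fineK // /F /= prob_Z_disc_translate //; apply: Zp_natr.
rewrite sumEFin sumr_const card_ord => -[vM]; rewrite -(fineK v_fin); congr (_%:E).
have M_neq0 : M%:R != 0 :> R by rewrite pnatr_eq0 -lt0n expn_p_gt0.
by apply: (mulIf M_neq0); rewrite /rho mulVf // mulr_natr vM.
Qed.

Lemma resvec_event m L v : [set w | resvec m L (zeta w) = v] =
  \bigcap_(k in [set k | (k <= L)%N]) Z k @^-1` disc (natvec v k) (rho m).
Proof.
apply/seteqP; split=> w wv; first exact: (resvecP _ (fun k _ => Zp_zeta w k)).1 wv.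
exact/(resvecP _ (fun k _ => Zp_zeta w k)).
Qed.

Lemma measurable_resvec m L v : measurable [set w | resvec m L (zeta w) = v].
Proof.
rewrite resvec_event; apply: bigcap_measurableType => k _.
by apply: Z_meas; apply: borelK_disc.
Qed.

Lemma prob_resvec m L v :
  P [set w | resvec m L (zeta w) = v] = (rho m.+1 ^+ L.+1)%:E.
Proof.
rewrite resvec_event.
have -> : [set k | (k <= L)%N] = [set k | k \in iota 0 L.+1].
  by apply/seteqP; split=> k /=; rewrite -/(iota 0 L.+1) mem_iota ltnS.
rewrite (Z_indep (B := fun k => disc (natvec v k) (rho m)) (iota_uniq 0 L.+1));
  last by move=> k; apply: borelK_disc.
rewrite (eq_bigr (fun=> (rho m.+1)%:E)) => [|k _]; last exact/prob_Z_disc/Zp_natr.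
by rewrite prodEFin -[iota 0 L.+1]/(index_iota 0 L.+1) prodr_const_nat subn0.
Qed.

Lemma cylindrical_event m L Q : cylindrical m L Q ->
  [set w | Q (zeta w)] =
  \big[setU/set0]_(v in [set v : residues m L | `[< Q (natvec v) >]]%SET)
    [set w | resvec m L (zeta w) = v].
Proof.
move=> cQ; apply/seteqP; split=> w.
  move=> /(cylindrical_resvec cQ (fun k _ => Zp_zeta w k)) Qw.
  have Sw : resvec m L (zeta w) \in [set v : residues m L | `[< Q (natvec v) >]]%SET.
    by rewrite inE; apply/asboolP.
  by rewrite (bigD1 _ Sw) /=; left.
elim/big_rec: _ => // v U; rewrite inE => /asboolP Qv IH [wv|/IH //].
by apply/(cylindrical_resvec cQ (fun k _ => Zp_zeta w k)); rewrite wv.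
Qed.

Lemma measurable_cylindrical m L Q : cylindrical m L Q ->
  measurable [set w | Q (zeta w)].
Proof.
move=> cQ; rewrite (cylindrical_event cQ).
by apply: bigsetU_measurable => v _; apply: measurable_resvec.
Qed.

Lemma prob_cylindrical m L Q : cylindrical m L Q ->
  P [set w | Q (zeta w)] =
  (#|[set v : residues m L | `[< Q (natvec v) >]]%SET|%:R * rho m.+1 ^+ L.+1)%:E.
Proof.
move=> cQ; rewrite (cylindrical_event cQ) measure_bigsetU_fin; last 2 first.
- exact: measurable_resvec.
- by move=> v v' _ _ [w [/= <- <-]].
rewrite (eq_bigr (fun=> (rho m.+1 ^+ L.+1)%:E)) => [|v _]; last exact: prob_resvec.
by rewrite sumEFin sumr_const mulr_natl.
Qed.

(* [Phi] induces a permutation of the residue vectors. *)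
Lemma prob_cylindrical_comp m L Q (Phi : (nat -> K) -> nat -> K) :
  cylindrical m L Q ->
  (forall z, (forall k, (k <= L)%N -> Zp abs (z k)) ->
     forall k, (k <= L)%N -> Zp abs (Phi z k)) ->
  (forall z z', congruent m L z z' <-> congruent m L (Phi z) (Phi z')) ->
  P [set w | Q (Phi (zeta w))] = P [set w | Q (zeta w)].
Proof.
move=> cQ Phi_Zp Phi_cong.
have cQPhi : cylindrical m L (Q \o Phi) by move=> z z' /Phi_cong; apply: cQ.
rewrite (prob_cylindrical cQPhi) (prob_cylindrical cQ); congr ((_%:R * _)%:E).
pose sig (v : residues m L) := resvec m L (Phi (natvec v)).
have Zn (v : residues m L) k : (k <= L)%N -> Zp abs (natvec v k).
  by move=> _; apply: Zp_natr.
have sigE v : congruent m L (Phi (natvec v)) (natvec (sig v)).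
  exact: (resvecP _ (Phi_Zp _ (Zn v))).1.
have sig_inj : injective sig.
  move=> v1 v2 e; rewrite -[v1]resvec_natvec; apply/(resvecP _ (Zn v1)).
  apply/Phi_cong; apply: congruent_trans (sigE v1) _; rewrite e.
  exact: congruent_sym (sigE v2).
rewrite -[RHS](card_preimset _ sig_inj).
apply: eq_card => v; rewrite !inE /=.
by apply/asboolP/asboolP; [apply: cQ (sigE v) | apply: cQ (congruent_sym (sigE v))].
Qed.

(** * Random Mahler series *)

Section MahlerSeries.
Variable a : nat -> K.
Hypothesis a_null : null_seq a.

Local Notation X := (mahler_series abs a Z).

Definition acoef (z : nat -> K) (k : nat) : K := a k * z k.

Lemma abs_acoef_le z k : Zp abs (z k) -> abs (acoef z k) <= abs (a k).
Proof. by move=> Zz; rewrite absM ler_piMr ?abs_ge0. Qed.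

Lemma acoef_congruent m L z z' (r : R) : congruent m L z z' ->
  forall k, (k <= L)%N -> abs (a k) * rho m < r -> abs (acoef z k - acoef z' k) < r.
Proof.
by move=> zz' k kL ar; rewrite /acoef -mulrBr (abs_mul_lt (ltW (zz' k kL)) ar).
Qed.

Lemma mahler_series_trunc w t N (e : R) : Zp abs t -> 0 < e ->
  (forall k, (N <= k)%N -> abs (a k) < e) ->
  abs (X w t - mahler_poly N (acoef (zeta w)) t) < e.
Proof.
move=> Zt e_gt0 ae.
have term_le k : abs (a k * Z k w * binom t k) <= abs (a k).
  rewrite absM (le_trans _ (abs_acoef_le (Zp_zeta w k))) //.
  by rewrite ler_piMr ?abs_ge0 ?abs_binom_le1.
apply: series_sum_trunc => // [e' e'_gt0|k Nk].
  have [N' aN'] := a_null e'_gt0; exists N' => k N'k.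
  exact: le_lt_trans (term_le k) (aN' k N'k).
exact: le_lt_trans (term_le k) (ae k Nk).
Qed.

Lemma preimage_X_supball N g (r : R) : 0 < r ->
  (forall k, (N <= k)%N -> abs (a k) < r) ->
  X @^-1` supball g r = [set w | supball g r (mahler_poly N (acoef (zeta w)))].
Proof.
move=> r_gt0 ar; apply/seteqP; split=> w; apply: (supball_congr _ _).1 => t Zt.
  exact: mahler_series_trunc.
by rewrite abs_distC; apply: mahler_series_trunc.
Qed.

Lemma preimage_X1_supball N g (r : R) : 0 < r ->
  (forall k, (N <= k)%N -> abs (a k) < r) ->
  (fun w t => X w (t + 1)) @^-1` supball g r =
  [set w | supball g r (mahler_poly N (fun k => acoef (zeta w) k + acoef (zeta w) k.+1))].
Proof.
move=> r_gt0 ar.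
have X1 w t : Zp abs t -> abs (X w (t + 1) -
    mahler_poly N (fun k => acoef (zeta w) k + acoef (zeta w) k.+1) t) < r.
  move=> Zt; have -> : X w (t + 1) -
      mahler_poly N (fun k => acoef (zeta w) k + acoef (zeta w) k.+1) t =
      (X w (t + 1) - mahler_poly N.+1 (acoef (zeta w)) (t + 1)) +
      acoef (zeta w) N * binom t N.
    by rewrite (mahler_polyD1 Qp_char0); ring.
  apply: absD_lt.
    apply: mahler_series_trunc => [|//|k /ltnW]; last exact: ar.
    exact: ZpD Zt (Zp_natr 1).
  rewrite absM (le_lt_trans _ (ar N (leqnn N))) //.
  apply: le_trans (abs_acoef_le (Zp_zeta w N)).
  by rewrite ler_piMr ?abs_ge0 ?abs_binom_le1.
apply/seteqP; split=> w; apply: (supball_congr _ _).1 => t Zt; first exact: X1.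
by rewrite abs_distC; apply: X1.
Qed.

Lemma cylindrical_supball_mahler m L N g (r : R) (C : (nat -> K) -> nat -> K) :
  0 < r -> (forall z z', congruent m L z z' -> forall k, (k < N)%N ->
    abs (C z k - C z' k) < r) ->
  cylindrical m L (fun z => supball g r (mahler_poly N (C z))).
Proof.
move=> r_gt0 Cc z z' zz'; apply: (supball_congr _ _).1 => t Zt.
rewrite mahler_polyB; apply: abs_sum_lt => // k _; rewrite absM.
apply: le_lt_trans (Cc _ _ zz' k (ltn_ord k)).
by rewrite ler_piMr ?abs_ge0 ?abs_binom_le1.
Qed.

Lemma measurable_X_supball g (r : R) : 0 < r -> measurable (X @^-1` supball g r).
Proof.
move=> r_gt0; have [N aN] := a_null r_gt0.
have [m am] := exists_rho_mul_lt (fun k => abs (a k)) N r_gt0.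
rewrite (preimage_X_supball g r_gt0 aN).
apply: (measurable_cylindrical (m := m) (L := N)
  (Q := fun z => supball g r (mahler_poly N (acoef z)))).
apply: cylindrical_supball_mahler => // z z' zz' k kN.
by apply: acoef_congruent zz' k (ltnW kN) (am k kN).
Qed.

Lemma abs_X_coef_sub_lt N c (r : R) w : 0 < r ->
  (forall k, (N <= k)%N -> abs (a k) < r) ->
  supball (mahler_poly N c) r (X w) ->
  forall k, (k < N)%N -> abs (a k * Z k w - c k) < r.
Proof.
move=> r_gt0 ar /(supball_congr _ _).1 Xw; apply: abs_mahler_coef_lt => t Zt.
by rewrite -mahler_polyB; apply: Xw => // u Zu; apply: mahler_series_trunc.
Qed.

Lemma prob_X1_supball_gt0 (z0 : nat -> K) N (r : R) :
  (forall k, Zp abs (z0 k)) -> 0 < r -> (forall k, (N <= k)%N -> abs (a k) < r) ->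
  (0 < P ((fun w t => X w (t + 1)) @^-1`
          supball (mahler_poly N (fun k => (acoef z0 k + acoef z0 k.+1)%R)) r))%E.
Proof.
move=> Zz0 r_gt0 ar; rewrite (preimage_X1_supball _ r_gt0 ar).
set g := mahler_poly N _.
pose Q z := supball g r (mahler_poly N (fun k => acoef z k + acoef z k.+1)).
have [m am] := exists_rho_mul_lt (fun k => abs (a k)) N.+1 r_gt0.
have cQ : cylindrical m N Q.
  apply: cylindrical_supball_mahler => // z z' zz' k kN.
  rewrite opprD addrACA; apply: absD_lt.
    exact: acoef_congruent zz' _ (ltnW kN) (am _ (ltnW kN)).
  exact: acoef_congruent zz' k.+1 kN (am k.+1 kN).
rewrite (prob_cylindrical cQ) lte_fin mulr_gt0 ?exprn_gt0 ?rho_gt0 // ltr0n.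
apply/card_gt0P; exists (resvec m N z0); rewrite inE; apply/asboolP.
apply/(cylindrical_resvec cQ (fun k _ => Zz0 k)) => t Zt.
by rewrite subrr abs0.
Qed.

Section Nonincreasing.
Hypothesis a_noninc : forall n, abs (a n.+1) <= abs (a n).

Lemma abs_ratio_le1 k : abs (a k.+1 / a k) <= 1.
Proof.
have [->|ak_neq0] := eqVneq (a k) 0; first by rewrite invr0 mulr0 abs0 ler01.
by rewrite absM absV ler_pdivrMr ?abs_gt0 // mul1r.
Qed.

Lemma mulr_ratio k : a k * (a k.+1 / a k) = a k.+1.
Proof.
have [ak_eq0|ak_neq0] := eqVneq (a k) 0; last by rewrite mulrCA mulfV ?mulr1.
have : abs (a k.+1) <= 0 by rewrite -abs0 -ak_eq0 a_noninc.
rewrite ak_eq0 mul0r => ak1_le0; apply/esym/abs_eq0/le_anti.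
by rewrite ak1_le0 abs_ge0.
Qed.

(* By [abs_ratio_le1] the ratios a_(k+1)/a_k lie in Z_p, so [shear N] is a unipotent
   triangular bijection of Z_p^(N+1) that preserves congruences mod p^(m+1). *)
Definition shear N (z : nat -> K) (k : nat) : K :=
  if (k < N)%N then z k + a k.+1 / a k * z k.+1 else z k.

Lemma acoef_shear N z k : (k < N)%N ->
  acoef (shear N z) k = acoef z k + acoef z k.+1.
Proof. by move=> kN; rewrite /acoef /shear kN mulrDr mulrA mulr_ratio. Qed.

Lemma shear_Zp N z : (forall k, (k <= N)%N -> Zp abs (z k)) ->
  forall k, (k <= N)%N -> Zp abs (shear N z k).
Proof.
move=> Zz k kN; rewrite /shear; case: ifP => [kN'|_]; last exact: Zz.
by apply: ZpD (Zz k kN) _; apply: absM_le1 (abs_ratio_le1 k) (Zz _ kN').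
Qed.

Lemma congruent_shear m N z z' :
  congruent m N z z' <-> congruent m N (shear N z) (shear N z').
Proof.
have shearB k : (k < N)%N -> shear N z k - shear N z' k =
    (z k - z' k) + a k.+1 / a k * (z k.+1 - z' k.+1).
  by move=> kN; rewrite /shear kN; ring.
have small k : abs (z k.+1 - z' k.+1) < rho m ->
    abs (a k.+1 / a k * (z k.+1 - z' k.+1)) < rho m.
  move=> zk; rewrite absM (le_lt_trans _ zk) //.
  by rewrite ler_piMl ?abs_ge0 ?abs_ratio_le1.
split=> zz' k kN.
  case: (ltnP k N) => [kN'|Nk]; last by rewrite /shear ltnNge Nk /=; apply: zz'.
  by rewrite shearB //; apply: absD_lt; [apply: zz' | apply/small/zz'].
rewrite -(subKn kN); elim: (N - k)%N (leq_subr k N) => [|j IH] jN.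
  by have := zz' N (leqnn N); rewrite /shear ltnn subn0.
have kN' : (N - j.+1 < N)%N by lia.
have kS : (N - j.+1).+1 = (N - j)%N by lia.
have := zz' _ (ltnW kN'); rewrite shearB // => zs.
have -> : z (N - j.+1)%N - z' (N - j.+1)%N =
    (shear N z (N - j.+1) - shear N z' (N - j.+1)) -
    a (N - j.+1).+1 / a (N - j.+1) * (z (N - j.+1).+1 - z' (N - j.+1).+1).
  by rewrite shearB //; ring.
apply: absB_lt; first by apply: zz'; apply: ltnW.
by apply: small; rewrite kS; apply/IH/ltnW.
Qed.

Lemma prob_X1_supball g (r : R) : 0 < r ->
  P ((fun w t => X w (t + 1)) @^-1` supball g r) = P (X @^-1` supball g r).
Proof.
move=> r_gt0; have [N aN] := a_null r_gt0.
have [m am] := exists_rho_mul_lt (fun k => abs (a k)) N r_gt0.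
pose Q z := supball g r (mahler_poly N (acoef z)).
have cQ : cylindrical m N Q.
  apply: cylindrical_supball_mahler => // z z' zz' k kN.
  exact: acoef_congruent zz' k (ltnW kN) (am k kN).
have sh w : mahler_poly N (acoef (shear N (zeta w))) =
    mahler_poly N (fun k => acoef (zeta w) k + acoef (zeta w) k.+1).
  exact/eq_mahler_poly/acoef_shear.
have -> : (fun w t => X w (t + 1)) @^-1` supball g r = [set w | Q (shear N (zeta w))].
  by rewrite (preimage_X1_supball g r_gt0 aN); apply/funext => w /=; rewrite /Q sh.
rewrite (preimage_X_supball g r_gt0 aN).
by apply: (prob_cylindrical_comp cQ); [apply: shear_Zp | apply: congruent_shear].
Qed.

Lemma prob_Xnat_supball j g (r : R) : 0 < r ->
  P ((fun w t => X w (t + j%:R)) @^-1` supball g r) = P (X @^-1` supball g r).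
Proof.
elim: j g => [|j IH] g r_gt0.
  have -> // : (fun w t => X w (t + 0%:R)) = X.
  by apply/funext => w; apply/funext => t; rewrite addr0.
have -> : (fun w t => X w (t + j.+1%:R)) =
    (fun w t => (fun w u => X w (u + 1)) w (t + j%:R)).
  by apply/funext => w; apply/funext => t; rewrite -natr1 addrA.
rewrite (preimage_supball_shift (fun w u => X w (u + 1)) _ _ (Zp_natr j)).
rewrite (prob_X1_supball _ r_gt0).
by rewrite -(preimage_supball_shift X g r (Zp_natr j)); apply: IH.
Qed.

Lemma Xshift_near_Xnat s (r : R) : Zp abs s -> 0 < r -> exists j : nat,
  forall w t, Zp abs t -> abs (X w (t + s) - X w (t + j%:R)) < r.
Proof.
move=> Zs r_gt0; have [N aN] := a_null r_gt0.
have [m cont] := mahler_poly_equicontinuous (fun k => abs (a k)) N r_gt0.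
have [j _ sj] := natr_approx m Zs.
exists j => w t Zt; have Zts := ZpD Zt Zs; have Ztj := ZpD Zt (Zp_natr j).
set f := mahler_poly N (acoef (zeta w)).
have -> : X w (t + s) - X w (t + j%:R) =
    ((X w (t + s) - f (t + s)) - (X w (t + j%:R) - f (t + j%:R))) +
    (f (t + s) - f (t + j%:R)) by ring.
apply: absD_lt; first by apply: absB_lt; apply: mahler_series_trunc.
apply: cont => // [k|]; first exact: abs_acoef_le (Zp_zeta w k).
by have -> : t + s - (t + j%:R) = s - j%:R by ring.
Qed.

Lemma prob_Xshift_supball s g (r : R) : Zp abs s -> 0 < r ->
  [/\ measurable (X @^-1` supball g r),
      measurable ((fun w t => X w (t + s)) @^-1` supball g r) &
      P (X @^-1` supball g r) = P ((fun w t => X w (t + s)) @^-1` supball g r)].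
Proof.
move=> Zs r_gt0; have [j Xsj] := Xshift_near_Xnat Zs r_gt0.
have -> : (fun w t => X w (t + s)) @^-1` supball g r =
    (fun w t => X w (t + j%:R)) @^-1` supball g r.
  by apply/funext => w; apply/propext; apply: supball_congr => t Zt; apply: Xsj.
rewrite prob_Xnat_supball // (preimage_supball_shift X _ _ (Zp_natr j)).
by split => //; apply: measurable_X_supball.
Qed.

Lemma stationary_mahler_series : stationary abs P X.
Proof.
move=> s Zs B /borelC_sub_supballs.
apply: (prob_preimage_eq_sigma setI_closed_supballs) => {B} _ [->|[g [r [r_gt0 ->]]]].
  by rewrite !preimage_set0; split.
exact: prob_Xshift_supball.
Qed.

End Nonincreasing.

Lemma nonincreasing_of_stationary : stationary abs P X ->
  forall n, abs (a n.+1) <= abs (a n).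
Proof.
move=> stat n; rewrite leNgt; apply/negP => lt_a; set r := abs (a n.+1).
have r_gt0 : 0 < r by apply: le_lt_trans lt_a; apply: abs_ge0.
have [N0 aN0] := a_null r_gt0; set N := maxn N0 n.+2.
have aN k : (N <= k)%N -> abs (a k) < r.
  by move=> Nk; apply: aN0; apply: leq_trans Nk; apply: leq_maxl.
have nN : (n < N)%N by apply: leq_trans (leq_maxr N0 n.+2).
(* [g] is X(. + 1) for the sample Z = e; its n-th Mahler coefficient a_(n+1) is
   at distance exactly r from every a_n Z_n, so X never comes within r of [g]. *)
pose e k : K := (k == n.+1)%:R.
pose g := mahler_poly N (fun k => acoef e k + acoef e k.+1).
have Bg : borelC abs (supball g r).
  by apply: sub_sigma_algebra; exists g, r; split; [apply: continuous_mahler_poly | split].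
have X_empty : X @^-1` supball g r = set0.
  apply/seteqP; split=> // w /(abs_X_coef_sub_lt r_gt0 aN)/(_ n nN).
  rewrite /acoef /e /= eqxx (ltn_eqF (ltnSn n)) mulr0 mulr1 add0r.
  have small : abs (a n * Z n w) < abs (- a n.+1).
    by rewrite absN; apply: le_lt_trans (abs_acoef_le (Zp_zeta w n)) lt_a.
  by rewrite addrC (abs_addr_dom small) absN ltxx.
have := prob_X1_supball_gt0 (fun k => Zp_natr (k == n.+1)) r_gt0 aN.
by rewrite -/g -(stat 1 (Zp_natr 1) _ Bg) X_empty measure0 ltxx.
Qed.

End MahlerSeries.

End HaarCylinders.

End Padic.
End NonArchimedean.

Theorem theorem8p2 (p : nat) (R : realType) (K : fieldType) (abs : K -> R)
    (d : measure_display) (T : measurableType d) (P : probability T R)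
    (a : nat -> K) (Z : nat -> T -> K) :
  prime p -> is_Qp p abs ->
  (forall e : R, 0 < e -> exists N, forall n, (N <= n)%N -> abs (a n) < e) ->
  (forall n, measurable_K abs (Z n)) ->
  (forall n, haar_uniform abs P (Z n)) ->
  independent_family abs P Z ->
  (stationary abs P (mahler_series abs a Z) <->
   forall n, abs (a n.+1) <= abs (a n)).
Proof.
move=> p_prime absQp a_null Z_meas Z_haar Z_indep.
have habs := is_Qp_nonarchimedean absQp.
split.
  exact: (nonincreasing_of_stationary habs p_prime absQp Z_meas Z_haar Z_indep a_null).
exact: (stationary_mahler_series habs p_prime absQp Z_meas Z_haar Z_indep a_null).
Qed.
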